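(* Let $\mathbf{X},\mathbf{Y}$ be computable metric spaces with $\mathbf{Y}$ compact, and $\mathfrak{A}\subseteq\mathcal{A}(\mathbf{X})$, $\mathfrak{B}\subseteq\mathcal{A}(\mathbf{Y})$. Let computable $H,K$ witness $\mathrm{C}_{\mathbf{X}|\mathfrak{A}}\leq_W\mathrm{C}_{\mathbf{Y}|\mathfrak{B}}$, in the sense that for every $\psi$-name $p$ of a set $A$ in the domain of $\mathrm{C}_{\mathbf{X}|\mathfrak{A}}$, $K(p)$ is a $\psi$-name of a set in the domain of $\mathrm{C}_{\mathbf{Y}|\mathfrak{B}}$, and for every name $q$ of a point of $\psi(K(p))$, $H(\langle p,q\rangle)$ is a name of a point of $A$. Then for every $p\in\operatorname{dom}(\mathrm{C}_{\mathbf{X}|\mathfrak{A}}\psi)$ and every $\varepsilon>0$ there are $n\in\mathbb{N}$ and $\delta>0$ such that for all $q\in X_\varepsilon(\mathfrak{A})\cap B(p,2^{-n})$ we have $\lambda(\psi(K(q)))>\delta$.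
   Context: For a computable metric space $\mathbf{X}$, $\mathcal{A}(\mathbf{X})$ is the space of closed subsets with representation $\psi(p):=X\setminus\bigcup_{i}B_{p(i)}$, where $(B_j)$ is a standard enumeration of open balls with centers in the dense subset and rational radii. $\mathrm{C}_{\mathbf{X}|\mathfrak{A}}$ is closed choice restricted to the non-empty members of $\mathfrak{A}$ (input a closed set, output any point of it); $\operatorname{dom}(\mathrm{C}_{\mathbf{X}|\mathfrak{A}}\psi)$ is the set of $\psi$-names of such sets. Points are named via the Cauchy representation. $B(p,2^{-n})$ is the ball in Baire space $\mathbb{N}^\mathbb{N}$ (standard metric), $B(x,\varepsilon)$ the open ball in $\mathbf{X}$, and $\lambda(A)$ the outer diameter $\sup\{d(x,y)\mid x,y\in A\}$. For $\varepsilon>0$, $X_\varepsilon(\mathfrak{A}) := \overline{\psi^{-1}(\{A\in\mathfrak{A}\mid \forall x\in\mathbf{X}\ \exists B\in\mathfrak{A}\ B\subseteq A\setminus B(x,\varepsilon)\})}\subseteq\mathbb{N}^\mathbb{N}$, where $A$ and $B$ range over non-empty members of $\mathfrak{A}$ and the closure is taken in Baire space. *)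

From Stdlib Require Import Reals Lra Lia List.
Open Scope R_scope.

Definition cpair (x y : nat) : nat := (((x + y) * (x + y + 1)) / 2 + y)%nat.

Fixpoint code_list (s : list nat) : nat :=
  match s with
  | nil => 0%nat
  | a :: s' => S (cpair a (code_list s'))
  end.

Definition prefix (p : nat -> nat) (k : nat) : list nat := map p (seq 0 k).

Inductive prf : Type :=
| PZero : prf
| PSucc : prf
| PProj : nat -> prf
| PComp : prf -> list prf -> prf
| PRec  : prf -> prf -> prf
| PMu   : prf -> prf.

Inductive prf_eval : prf -> list nat -> nat -> Prop :=
| ev_zero v : prf_eval PZero v 0
| ev_succ x v : prf_eval PSucc (x :: v) (S x)
| ev_proj i v : prf_eval (PProj i) v (nth i v 0%nat)
| ev_comp f gs v ys z :
    Forall2 (fun g y => prf_eval g v y) gs ys ->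
    prf_eval f ys z -> prf_eval (PComp f gs) v z
| ev_rec0 f g v z : prf_eval f v z -> prf_eval (PRec f g) (0%nat :: v) z
| ev_recS f g n v y z :
    prf_eval (PRec f g) (n :: v) y -> prf_eval g (n :: y :: v) z ->
    prf_eval (PRec f g) (S n :: v) z
| ev_mu f v n :
    prf_eval f (n :: v) 0 ->
    (forall m, (m < n)%nat -> exists k, prf_eval f (m :: v) (S k)) ->
    prf_eval (PMu f) v n.

Definition total_rec (e : prf) : Prop := forall x, exists y, prf_eval e (x :: nil) y.

(* A total recursive M is used as a machine: to compute the n-th output *)
(* entry on input p, M is run on <n, code(p|k)> for k = 0, 1, 2, ...;   *)
(* answer 0 means "read more input", answer m+1 means "output m".       *)
(* Every computable partial function on Baire space is of this form.    *)

Definition machine_out (e : prf) (p : nat -> nat) (n m : nat) : Prop :=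
  exists k,
    prf_eval e (cpair n (code_list (prefix p k)) :: nil) (S m) /\
    (forall k', (k' < k)%nat ->
       prf_eval e (cpair n (code_list (prefix p k')) :: nil) 0%nat).

Definition runs (e : prf) (p r : nat -> nat) : Prop :=
  forall n, machine_out e p n (r n).

Definition computable_machine (e : prf) : Prop := total_rec e.

Definition bpair (p q : nat -> nat) : nat -> nat :=
  fun i => if Nat.even i then p (Nat.div2 i) else q (Nat.div2 i).

(* Baire-space ball B(p, 2^-n) for the standard metric
   d(p,q) = 2^-(min {i | p i <> q i}) (d(p,p) = 0):
   d(p,q) < 2^-n  iff  p and q agree on 0..n. *)
Definition baire_ball (p : nat -> nat) (n : nat) (q : nat -> nat) : Prop :=
  forall i, (i <= n)%nat -> p i = q i.

Definition baire_closure (S : (nat -> nat) -> Prop) (q : nat -> nat) : Prop :=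
  forall n, exists r, S r /\ baire_ball q n r.

Definition zdec (a : nat) : R :=
  if Nat.even a then INR (Nat.div2 a) else - INR (S (Nat.div2 a)).

Definition qcode (m : nat) (t : R) : Prop :=
  exists a b, m = cpair a b /\ t = zdec a / INR (S b).

Record CMS : Type := {
  carrier :> Type;
  dist : carrier -> carrier -> R;
  dist_eq0 : forall x y, dist x y = 0 <-> x = y;
  dist_sym : forall x y, dist x y = dist y x;
  dist_tri : forall x y z, dist x z <= dist x y + dist y z;
  alpha : nat -> carrier;
  alpha_dense : forall x eps, 0 < eps -> exists i, dist (alpha i) x < eps;
  (* (i,j) |-> d(alpha i, alpha j) is computable: a total recursive f
     yields rational 2^-n approximations. *)
  alpha_computable : exists f, total_rec f /\
    forall i j n m, prf_eval f (cpair (cpair i j) n :: nil) m ->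
      exists t, qcode m t /\ Rabs (dist (alpha i) (alpha j) - t) <= / 2 ^ n
}.

Arguments dist {c} _ _.
Arguments alpha {c} _.

Section Spaces.
Variable X : CMS.

Definition ball (x : X) (eps : R) (y : X) : Prop := dist x y < eps.

Definition is_open (U : X -> Prop) : Prop :=
  forall x, U x -> exists r, 0 < r /\ forall y, dist x y < r -> U y.

Definition is_closed (A : X -> Prop) : Prop := is_open (fun x => ~ A x).

Definition compact_space : Prop :=
  forall (I : Type) (U : I -> X -> Prop),
    (forall i, is_open (U i)) -> (forall x, exists i, U i x) ->
    exists l : list I, forall x, exists i, In i l /\ U i x.

Definition Bj (j : nat) (x : X) : Prop :=
  exists i a b, j = cpair i (cpair a b) /\
    dist (alpha i) x < INR (S a) / INR (S b).

Definition psi (p : nat -> nat) (x : X) : Prop := forall i, ~ Bj (p i) x.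

Definition cauchy_name (q : nat -> nat) (x : X) : Prop :=
  forall n, dist (alpha (q n)) x <= / 2 ^ n.

Definition member (F : (X -> Prop) -> Prop) (S : X -> Prop) : Prop :=
  exists A, F A /\ forall x, A x <-> S x.

Definition nonempty (S : X -> Prop) : Prop := exists x, S x.

Definition dom_Cpsi (F : (X -> Prop) -> Prop) (p : nat -> nat) : Prop :=
  member F (psi p) /\ nonempty (psi p).

Definition Xeps (F : (X -> Prop) -> Prop) (eps : R) : (nat -> nat) -> Prop :=
  baire_closure (fun p =>
    member F (psi p) /\ nonempty (psi p) /\
    forall x : X, exists B, F B /\ nonempty B /\
      forall y, B y -> psi p y /\ ~ ball x eps y).

(* lambda(A) > delta, with lambda(A) = sup {d(x,y) | x,y in A}. *)
Definition diam_gt (A : X -> Prop) (delta : R) : Prop :=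
  exists x y, A x /\ A y /\ delta < dist x y.

End Spaces.

Arguments ball {X} _ _ _.
Arguments psi {X} _ _.
Arguments cauchy_name {X} _ _.
Arguments dom_Cpsi {X} _ _.
Arguments Xeps {X} _ _ _.
Arguments diam_gt {X} _ _.
Arguments member {X} _ _.

From Pilot Require Import Defs.
From Stdlib Require Import Reals Lra Lia List ClassicalEpsilon Classical.
Import Defs.
Open Scope R_scope.

(* For each point y of psi (K p), the machine H applied to p and a name of y
   outputs a point x of psi p whose 2^-j approximation is fixed by finitely
   many input digits; compactness of Y makes one bound M work on a whole
   neighbourhood U of psi (K p), and continuity of K puts psi (K b) inside U
   for every b close to p.  If now q in X_eps is close to p and psi (K q) had
   diameter at most delta ~ 2^-M, take a domain name q' near q, a point w of
   psi (K q') and the x attached to w; by definition of X_eps some name b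
   near q describes a set avoiding the eps-ball around x.  Upper
   semicontinuity of psi (K _) at q puts every point y' of psi (K b) within
   5 delta of w, so H on b and a name of y' yields a point of psi b within
   eps of x: a contradiction. *)

(* The derived induction principle of [prf_eval] gives no hypothesis for the
   arguments of a composition, which sit under [Forall2]. *)
Section PrfEvalInd.
Variable P : prf -> list nat -> nat -> Prop.
Hypothesis P_zero : forall v, P PZero v 0.
Hypothesis P_succ : forall x v, P PSucc (x :: v) (S x).
Hypothesis P_proj : forall i v, P (PProj i) v (nth i v 0%nat).
Hypothesis P_comp : forall f gs v ys z,
  Forall2 (fun g y => prf_eval g v y /\ P g v y) gs ys ->
  prf_eval f ys z -> P f ys z -> P (PComp f gs) v z.
Hypothesis P_rec0 : forall f g v z,
  prf_eval f v z -> P f v z -> P (PRec f g) (0%nat :: v) z.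
Hypothesis P_recS : forall f g n v y z,
  prf_eval (PRec f g) (n :: v) y -> P (PRec f g) (n :: v) y ->
  prf_eval g (n :: y :: v) z -> P g (n :: y :: v) z ->
  P (PRec f g) (S n :: v) z.
Hypothesis P_mu : forall f v n,
  prf_eval f (n :: v) 0 -> P f (n :: v) 0 ->
  (forall m, (m < n)%nat -> exists k, prf_eval f (m :: v) (S k) /\ P f (m :: v) (S k)) ->
  P (PMu f) v n.

Fixpoint prf_eval_nested_ind f v y (H : prf_eval f v y) {struct H} : P f v y :=
  match H in prf_eval f v y return P f v y with
  | ev_zero v => P_zero v
  | ev_succ x v => P_succ x v
  | ev_proj i v => P_proj i v
  | ev_comp f gs v ys z Hgs Hf =>
      P_comp f gs v ys z
        ((fix args gs ys (Hgs : Forall2 (fun g y => prf_eval g v y) gs ys) :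
             Forall2 (fun g y => prf_eval g v y /\ P g v y) gs ys :=
          match Hgs in Forall2 _ gs ys
                return Forall2 (fun g y => prf_eval g v y /\ P g v y) gs ys with
          | Forall2_nil _ => Forall2_nil _
          | Forall2_cons g y Hg Hgs' =>
              Forall2_cons g y (conj Hg (prf_eval_nested_ind g v y Hg)) (args _ _ Hgs')
          end) gs ys Hgs)
        Hf (prf_eval_nested_ind f ys z Hf)
  | ev_rec0 f g v z Hf => P_rec0 f g v z Hf (prf_eval_nested_ind _ _ _ Hf)
  | ev_recS f g n v y z H1 H2 =>
      P_recS f g n v y z H1 (prf_eval_nested_ind _ _ _ H1) H2 (prf_eval_nested_ind _ _ _ H2)
  | ev_mu f v n Hn Hlt =>
      P_mu f v n Hn (prf_eval_nested_ind _ _ _ Hn)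
        (fun m Hm => match Hlt m Hm with
                     | ex_intro _ k Hk => ex_intro _ k (conj Hk (prf_eval_nested_ind _ _ _ Hk))
                     end)
  end.
End PrfEvalInd.

Lemma prf_eval_det f v y z : prf_eval f v y -> prf_eval f v z -> y = z.
Proof.
  intros Hy; revert z.
  induction Hy using prf_eval_nested_ind; intros z' Hz; inversion Hz; subst; auto.
  - apply IHHy; replace ys with ys0; [assumption|].
    match goal with Hgs : Forall2 _ gs ys0 |- _ => clear -H Hgs; revert ys0 Hgs end.
    induction H as [|g y gs ys [_ IHg] _ IH]; intros ys' Hgs;
      inversion Hgs; subst; f_equal; auto; symmetry; auto.
  - match goal with H1 : prf_eval (PRec f g) (n :: v) ?y' |- _ =>
      apply IHHy1 in H1; subst y'; auto end.
  - match goal with Hz0 : prf_eval f (z' :: v) 0, Hlt : forall m, (m < z')%nat -> _ |- _ =>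
      destruct (Nat.lt_trichotomy n z') as [Hc|[Hc|Hc]]; auto;
      [destruct (Hlt n Hc) as [k Hk]; apply IHHy in Hk
      |destruct (H z' Hc) as [k [_ Hk]]; apply Hk in Hz0]; discriminate end.
Qed.

Lemma prefix_ext u v k :
  (forall i, (i < k)%nat -> u i = v i) -> prefix u k = prefix v k.
Proof.
  intros H; apply map_ext_in; intros a Ha; apply in_seq in Ha; apply H; lia.
Qed.

Lemma baire_ball_le u v m n : baire_ball u m v -> (n <= m)%nat -> baire_ball u n v.
Proof. intros H Hnm i Hi; apply H; lia. Qed.

Lemma baire_ball_trans u v w n :
  baire_ball u n v -> baire_ball v n w -> baire_ball u n w.
Proof. intros H1 H2 i Hi; rewrite H1, H2; auto. Qed.

Lemma bpair_baire_ball p p' t t' n :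
  baire_ball p n p' -> baire_ball t n t' -> baire_ball (bpair p t) n (bpair p' t').
Proof.
  intros Hp Ht i Hi; unfold bpair; pose proof (Nat.le_div2_diag_l i).
  destruct (Nat.even i); [apply Hp | apply Ht]; lia.
Qed.

Lemma machine_out_cont e u n m :
  machine_out e u n m ->
  exists N, forall v m', baire_ball u N v -> machine_out e v n m' -> m' = m.
Proof.
  intros [k [Hk Hbefore]]; exists k; intros v m' Huv [k' [Hk' Hbefore']].
  assert (Hpre : forall j, (j <= k)%nat -> prefix v j = prefix u j).
  { intros j Hj; symmetry; apply prefix_ext; intros i Hi; apply Huv; lia. }
  destruct (Nat.lt_trichotomy k' k) as [Hc|[<-|Hc]].
  - rewrite Hpre in Hk' by lia.
    pose proof (prf_eval_det _ _ _ _ (Hbefore k' Hc) Hk'); discriminate.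
  - rewrite Hpre in Hk' by lia.
    pose proof (prf_eval_det _ _ _ _ Hk Hk'); congruence.
  - specialize (Hbefore' k Hc); rewrite Hpre in Hbefore' by lia.
    pose proof (prf_eval_det _ _ _ _ Hk Hbefore'); discriminate.
Qed.

Lemma runs_cont_upto e u r M :
  runs e u r ->
  exists N, forall v rv, baire_ball u N v -> runs e v rv ->
    forall i, (i <= M)%nat -> rv i = r i.
Proof.
  intros Hr; induction M as [|M [N IH]].
  - destruct (machine_out_cont _ _ _ _ (Hr 0%nat)) as [N HN].
    exists N; intros v rv Hv Hrv i Hi.
    replace i with 0%nat by lia; exact (HN v _ Hv (Hrv 0%nat)).
  - destruct (machine_out_cont _ _ _ _ (Hr (S M))) as [N' HN'].
    exists (Nat.max N N'); intros v rv Hv Hrv i Hi.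
    destruct (Nat.eq_dec i (S M)) as [->|Hne].
    + apply (HN' v); [eapply baire_ball_le; eauto; lia | apply Hrv].
    + apply (IH v); [eapply baire_ball_le; eauto; lia | auto | lia].
Qed.
Lemma dist_refl (X : CMS) (x : X) : dist x x = 0.
Proof. apply dist_eq0; reflexivity. Qed.

Lemma inv_pow2_pos n : 0 < / 2 ^ n.
Proof. apply Rinv_0_lt_compat, pow_lt; lra. Qed.

Lemma inv_pow2_le m n : (m <= n)%nat -> / 2 ^ n <= / 2 ^ m.
Proof. intros H; apply Rinv_le_contravar; [apply pow_lt | apply Rle_pow]; try lra; exact H. Qed.

Lemma inv_pow2_lt eps : 0 < eps -> exists n, / 2 ^ n < eps.
Proof.
  intros Heps; destruct (archimed_cor1 eps Heps) as [n [Hn Hn0]]; exists n.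
  apply Rle_lt_trans with (/ INR n); auto.
  apply Rinv_le_contravar; [apply lt_0_INR; auto|].
  enough (INR n + 1 <= 2 ^ n) by lra.
  clear; induction n as [|n IH]; [simpl; lra|].
  rewrite S_INR; simpl; pose proof (pos_INR n); lra.
Qed.

Definition tri (s : nat) : nat := (s * (s + 1) / 2)%nat.

Lemma tri_S s : tri (S s) = (tri s + S s)%nat.
Proof.
  unfold tri; replace (S s * (S s + 1))%nat with (s * (s + 1) + S s * 2)%nat by lia.
  rewrite Nat.div_add; lia.
Qed.

Lemma tri_lt s s' : (s < s')%nat -> (tri s + s < tri s')%nat.
Proof. induction 1; rewrite tri_S; lia. Qed.

Lemma cpair_inj x y x' y' : cpair x y = cpair x' y' -> x = x' /\ y = y'.
Proof.
  change (cpair x y) with (tri (x + y) + y)%nat;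
  change (cpair x' y') with (tri (x' + y') + y')%nat; intros H.
  destruct (Nat.lt_trichotomy (x + y) (x' + y')) as [Hc|[Hc|Hc]].
  - pose proof (tri_lt _ _ Hc); lia.
  - rewrite Hc in H; lia.
  - pose proof (tri_lt _ _ Hc); lia.
Qed.

Lemma Bj_open (X : CMS) j : is_open X (Bj X j).
Proof.
  intros x [i [a [b [Hj Hd]]]].
  exists (INR (S a) / INR (S b) - dist (alpha i) x); split; [lra|].
  intros y Hy; exists i, a, b; split; auto.
  pose proof (dist_tri X (alpha i) x y); lra.
Qed.

Lemma psi_closed (X : CMS) (p : nat -> nat) : is_closed X (psi p).
Proof.
  intros x Hx; apply not_all_not_ex in Hx as [i Hi].
  destruct (Bj_open X (p i) x Hi) as [rho [Hrho Hball]].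
  exists rho; split; auto; intros y Hy Hpsi; exact (Hpsi i (Hball y Hy)).
Qed.

Lemma closed_complement_Bj (X : CMS) (B : X -> Prop) z :
  is_closed X B -> ~ B z -> exists j, Bj X j z /\ forall w, Bj X j w -> ~ B w.
Proof.
  intros HB Hz; destruct (HB z Hz) as [rho [Hrho Hball]].
  destruct (archimed_cor1 (rho / 2)) as [[|c] [Hc Hc0]]; [lra|lia|].
  assert (Hc1 : 0 < / INR (S c)) by (apply Rinv_0_lt_compat, lt_0_INR; lia).
  destruct (alpha_dense X z _ Hc1) as [i Hi].
  exists (cpair i (cpair 0 c)); split.
  - exists i, 0%nat, c; split; auto; change (INR 1) with 1; lra.
  - intros w [i' [a' [c' [Hj Hd]]]].
    apply cpair_inj in Hj as [<- Hj]; apply cpair_inj in Hj as [<- <-].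
    change (INR 1) with 1 in Hd; unfold Rdiv in Hd; apply Hball.
    pose proof (dist_tri X z (alpha i) w); rewrite (dist_sym X z (alpha i)) in *; lra.
Qed.

(* Past position [N] the name lists every basic ball missing [B], so it still
   names [B] however its first [N + 1] entries were chosen. *)
Lemma psi_name_extension (X : CMS) (q : nat -> nat) N (B : X -> Prop) :
  is_closed X B -> (forall z, B z -> psi q z) ->
  exists b, baire_ball q N b /\ forall z, psi b z <-> B z.
Proof.
  intros HB Hsub.
  set (misses j := forall w, Bj X j w -> ~ B w).
  exists (fun i => if Nat.leb i N then q i else
            if excluded_middle_informative (misses (i - S N)%nat)
            then (i - S N)%nat else q 0%nat).
  split.
  - intros i Hi; apply Nat.leb_le in Hi; rewrite Hi; auto.
  - intros z; split.
    + intros Hz; apply NNPP; intros HnB.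
      destruct (closed_complement_Bj X B z HB HnB) as [j [Hj Hmiss]].
      apply (Hz (j + S N)%nat).
      replace (Nat.leb (j + S N) N) with false by (symmetry; apply Nat.leb_gt; lia).
      replace (j + S N - S N)%nat with j by lia.
      destruct (excluded_middle_informative (misses j)); [auto | contradiction].
    + intros Hz i; destruct (Nat.leb i N); [apply Hsub; auto|].
      destruct (excluded_middle_informative _) as [Hmiss|_]; [|apply Hsub; auto].
      intros Hb; exact (Hmiss z Hb Hz).
Qed.

Lemma slack_name (X : CMS) (x : X) :
  exists t : nat -> nat, forall i, dist (alpha (t i)) x < / 2 ^ i / 2.
Proof.
  assert (H : forall i, exists m, dist (alpha m) x < / 2 ^ i / 2).
  { intros i; apply alpha_dense; pose proof (inv_pow2_pos i); lra. }
  exists (fun i => proj1_sig (constructive_indefinite_description _ (H i))).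
  intros i; exact (proj2_sig (constructive_indefinite_description _ (H i))).
Qed.

Lemma slack_name_cauchy (X : CMS) (t : nat -> nat) (x : X) :
  (forall i, dist (alpha (t i)) x < / 2 ^ i / 2) -> cauchy_name t x.
Proof. intros Ht i; specialize (Ht i); pose proof (inv_pow2_pos i); lra. Qed.

(* The slack of [t] absorbs the move from [x] to [x'] on the first [L + 1] entries. *)
Lemma cauchy_name_perturb (X : CMS) (t : nat -> nat) (x x' : X) L :
  (forall i, dist (alpha (t i)) x < / 2 ^ i / 2) -> dist x x' < / 2 ^ L / 2 ->
  exists t', baire_ball t L t' /\ cauchy_name t' x'.
Proof.
  intros Ht Hxx'; destruct (slack_name X x') as [t'' Ht''].
  exists (fun i => if Nat.leb i L then t i else t'' i); split.
  - intros i Hi; apply Nat.leb_le in Hi; rewrite Hi; auto.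
  - intros i; destruct (Nat.leb i L) eqn:E.
    + apply Nat.leb_le in E; pose proof (inv_pow2_le _ _ E).
      pose proof (dist_tri X (alpha (t i)) x x'); specialize (Ht i); lra.
    + apply slack_name_cauchy; auto.
Qed.

Lemma cauchy_name_agree_dist (X : CMS) (s s' : nat -> nat) (x x' : X) j :
  cauchy_name s x -> cauchy_name s' x' -> s j = s' j -> dist x x' <= 2 * / 2 ^ j.
Proof.
  intros Hs Hs' Hj; specialize (Hs j); specialize (Hs' j); rewrite Hj in Hs.
  pose proof (dist_tri X x (alpha (s' j)) x'); rewrite (dist_sym X x (alpha _)) in *; lra.
Qed.

Lemma compact_closed_cover_incr (Y : CMS) (A : Y -> Prop) (U : nat -> Y -> Prop) :
  compact_space Y -> is_closed Y A -> (forall M, is_open Y (U M)) ->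
  (forall M M' y, (M <= M')%nat -> U M y -> U M' y) ->
  (forall y, A y -> exists M, U M y) -> exists M, forall y, A y -> U M y.
Proof.
  intros HY HA HU Hincr Hcov.
  set (V (a : option nat) := match a with Some M => U M | None => fun y => ~ A y end).
  destruct (HY _ V) as [l Hl].
  - intros [M|]; [apply HU | apply HA].
  - intros y; destruct (classic (A y)) as [Hy|Hy].
    + destruct (Hcov y Hy) as [M HM]; exists (Some M); exact HM.
    + exists None; exact Hy.
  - set (bound (a : option nat) := match a with Some M => M | None => 0%nat end).
    exists (list_max (map bound l)).
    pose proof (proj1 (list_max_le (map bound l) _) (le_n _)) as Hbound.
    rewrite Forall_forall in Hbound.
    intros y Hy; destruct (Hl y) as [[M|] [Hin HV]]; [|contradiction].
    apply (Hincr M); [|exact HV].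
    apply (Hbound (bound (Some M))), in_map, Hin.
Qed.

(* Upper semicontinuity of [psi] along a machine: a point outside an open
   [U] containing [psi r] lies in a basic ball listed by [r], and compactness
   makes finitely many listed balls, hence a finite prefix of the input, enough. *)
Lemma psi_runs_usc (Y : CMS) e u r (U : Y -> Prop) :
  compact_space Y -> runs e u r -> is_open Y U -> (forall y, psi r y -> U y) ->
  exists N, forall v rv, baire_ball u N v -> runs e v rv ->
    forall y, psi rv y -> U y.
Proof.
  intros HY Hr HU HrU.
  set (W M y := U y \/ exists i, (i <= M)%nat /\ Bj Y (r i) y).
  destruct (compact_closed_cover_incr Y (fun _ => True) W HY) as [M HM].
  - intros y Hy; contradiction.
  - intros M y [Hy|[i [Hi Hb]]].
    + destruct (HU y Hy) as [rho [Hrho Hball]].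
      exists rho; split; auto; intros z Hz; left; auto.
    + destruct (Bj_open Y (r i) y Hb) as [rho [Hrho Hball]].
      exists rho; split; auto; intros z Hz; right; exists i; auto.
  - intros M M' y HMM' [Hy|[i [Hi Hb]]]; [left | right; exists i; split]; auto; lia.
  - intros y _; destruct (classic (psi r y)) as [Hy|Hy].
    + exists 0%nat; left; auto.
    + apply not_all_not_ex in Hy as [i Hi]; exists i; right; exists i; auto.
  - destruct (runs_cont_upto e u r M Hr) as [N HN].
    exists N; intros v rv Hv Hrv y Hy.
    destruct (HM y I) as [HUy|[i [Hi Hb]]]; auto.
    rewrite <- (HN v rv Hv Hrv i Hi) in Hb; destruct (Hy i Hb).
Qed.

Lemma psi_runs_small_diam (Y : CMS) e q r delta :
  compact_space Y -> runs e q r -> 0 < delta -> ~ diam_gt (@psi Y r) delta ->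
  exists N, forall v v' rv rv' (y y' : Y),
    baire_ball q N v -> baire_ball q N v' -> runs e v rv -> runs e v' rv' ->
    psi rv y -> psi rv' y' -> dist y y' < 5 * delta.
Proof.
  intros HY Hr Hdelta Hsmall.
  set (U (y : Y) := exists z, psi r z /\ dist z y < 2 * delta).
  destruct (psi_runs_usc Y e q r U HY Hr) as [N HN].
  - intros y [z [Hz Hzy]]; exists (2 * delta - dist z y); split; [lra|].
    intros w Hw; exists z; split; auto; pose proof (dist_tri Y z y w); lra.
  - intros y Hy; exists y; split; auto; rewrite dist_refl; lra.
  - exists N; intros v v' rv rv' y y' Hv Hv' Hrv Hrv' Hy Hy'.
    destruct (HN v rv Hv Hrv y Hy) as [z [Hz Hzy]].
    destruct (HN v' rv' Hv' Hrv' y' Hy') as [z' [Hz' Hzy']].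
    assert (Hzz' : dist z z' <= delta)
      by (apply Rnot_lt_le; intros Hlt; apply Hsmall; exists z, z'; auto).
    pose proof (dist_tri Y y z y'); pose proof (dist_tri Y z z' y').
    rewrite (dist_sym Y y z) in *; lra.
Qed.

Lemma Xeps_avoiding_names (X : CMS) (FA : (X -> Prop) -> Prop) eps q N :
  (forall A, FA A -> is_closed X A) -> Xeps FA eps q ->
  exists q', baire_ball q N q' /\ dom_Cpsi FA q' /\
    forall x : X, exists b, baire_ball q N b /\ dom_Cpsi FA b /\
      forall x', psi b x' -> ~ ball x eps x'.
Proof.
  intros HFA Hq; destruct (Hq N) as [q' [[Hmem [Hne Havoid]] Hqq']].
  exists q'; split; [|split]; [exact Hqq' | split; auto |].
  intros x; destruct (Havoid x) as [B [HBF [HBne HBsub]]].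
  destruct (psi_name_extension X q' N B (HFA B HBF) (fun z Hz => proj1 (HBsub z Hz)))
    as [b [Hq'b Hb]].
  exists b; split; [|split; [split|]].
  - eapply baire_ball_trans; eauto.
  - exists B; split; auto; intros z; rewrite Hb; tauto.
  - destruct HBne as [z Hz]; exists z; apply Hb, Hz.
  - intros x' Hx'; apply Hb in Hx'; apply (HBsub x' Hx').
Qed.

Section Realizers.
Variables X Y : CMS.

Definition realizes (eH : prf) (p r : nat -> nat) : Prop :=
  forall (t : nat -> nat) (y : Y), psi r y -> cauchy_name t y ->
    exists s, runs eH (bpair p t) s /\ exists x : X, cauchy_name s x /\ psi p x.

(* [x] is produced by [eH] from [p] and a name of [y] whose [j]-th output
   is fixed by the first [L + 1] entries of both inputs; hence every input
   close enough to these yields a point [2^-j]-close to [x]. *)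
Definition stable_witness eH p j (y : Y) L (x : X) : Prop :=
  psi p x /\
  forall b r' (y' : Y), realizes eH b r' -> baire_ball p L b -> psi r' y' ->
    dist y y' < / 2 ^ L / 2 -> exists x', psi b x' /\ dist x x' <= 2 * / 2 ^ j.

Lemma realizer_stable_witness eH p r j (y : Y) :
  realizes eH p r -> psi r y -> exists L x, stable_witness eH p j y L x.
Proof.
  intros Hreal Hy; destruct (slack_name Y y) as [t Ht].
  destruct (Hreal t y Hy (slack_name_cauchy Y t y Ht)) as [s [Hs [x [Hsx Hx]]]].
  destruct (machine_out_cont _ _ _ _ (Hs j)) as [L HL].
  exists L, x; split; auto.
  intros b r' y' Hreal' Hpb Hy' Hyy'.
  destruct (cauchy_name_perturb Y t y y' L Ht Hyy') as [t' [Htt' Ht'y']].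
  destruct (Hreal' t' y' Hy' Ht'y') as [s' [Hs' [x' [Hs'x' Hx']]]].
  exists x'; split; auto.
  apply (cauchy_name_agree_dist X s s' x x' j Hsx Hs'x'); symmetry.
  exact (HL _ _ (bpair_baire_ball _ _ _ _ _ Hpb Htt') (Hs' j)).
Qed.

Lemma realizer_uniform_stability eH p r j :
  compact_space Y -> realizes eH p r ->
  exists M (U : Y -> Prop), is_open Y U /\ (forall y, psi r y -> U y) /\
    forall z, U z -> exists y L x, (L <= M)%nat /\ dist y z < / 2 ^ L / 4 /\
      stable_witness eH p j y L x.
Proof.
  intros HY Hreal.
  set (W M (z : Y) := exists y L x, (L <= M)%nat /\ dist y z < / 2 ^ L / 4 /\
                                    stable_witness eH p j y L x).
  assert (HW : forall M, is_open Y (W M)).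
  { intros M z [y [L [x [HLM [Hyz Hst]]]]].
    exists (/ 2 ^ L / 4 - dist y z); split; [lra|].
    intros w Hw; exists y, L, x; split; [exact HLM | split; [|exact Hst]].
    pose proof (dist_tri Y y z w); lra. }
  destruct (compact_closed_cover_incr Y (psi r) W HY (psi_closed Y r) HW) as [M HM].
  - intros M M' z HMM' [y [L [x [HLM Hrest]]]]; exists y, L, x; split; auto; lia.
  - intros y Hy; destruct (realizer_stable_witness eH p r j y Hreal Hy) as [L [x Hst]].
    exists L, y, L, x; split; [lia | split; [|exact Hst]].
    rewrite dist_refl; pose proof (inv_pow2_pos L); lra.
  - exists M, (W M); auto.
Qed.

End Realizers.

Arguments realizes {X Y} _ _ _.
Arguments stable_witness {X Y} _ _ _ _ _ _.

Theorem lemma19 (X Y : CMS) (HY : compact_space Y)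
  (FA : (X -> Prop) -> Prop) (FB : (Y -> Prop) -> Prop)
  (HFA : forall A, FA A -> is_closed X A)
  (HFB : forall B, FB B -> is_closed Y B)
  (eH eK : prf) (Hcomp : computable_machine eH) (Kcomp : computable_machine eK)
  (HK : forall p, dom_Cpsi FA p ->
     exists r, runs eK p r /\ dom_Cpsi FB r /\
       forall (q : nat -> nat) (y : Y), psi r y -> cauchy_name q y ->
         exists s, runs eH (bpair p q) s /\
           exists x : X, cauchy_name s x /\ psi p x) :
  forall p, dom_Cpsi FA p -> forall eps, 0 < eps ->
    exists (n : nat) (delta : R), 0 < delta /\
      forall q, Xeps FA eps q -> baire_ball p n q ->
        forall r, runs eK q r -> diam_gt (@psi Y r) delta.
Proof.
  intros p Hp eps Heps.
  destruct (HK p Hp) as [r0 [Hr0 [_ Hreal0]]].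
  destruct (inv_pow2_lt (eps / 2)) as [j Hj]; [lra|].
  destruct (realizer_uniform_stability X Y eH p r0 j HY Hreal0)
    as [M [U [HUopen [Hr0U HU]]]].
  destruct (psi_runs_usc Y eK p r0 U HY Hr0 HUopen Hr0U) as [N1 HN1].
  set (delta := / 2 ^ M / 20).
  assert (Hdelta : 0 < delta) by (pose proof (inv_pow2_pos M); unfold delta; lra).
  exists (Nat.max M N1), delta; split; [exact Hdelta|].
  intros q Hq Hpq r Hr; apply NNPP; intros Hsmall.
  destruct (psi_runs_small_diam Y eK q r delta HY Hr Hdelta Hsmall) as [N2 HN2].
  set (N := Nat.max (Nat.max M N1) N2).
  assert (Hnear : forall v, baire_ball q N v -> baire_ball p (Nat.max M N1) v)
    by (intros v Hv; eapply baire_ball_trans; [exact Hpq | eapply baire_ball_le; eauto; lia]).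
  destruct (Xeps_avoiding_names X FA eps q N HFA Hq) as [q' [Hqq' [Hq' Havoid]]].
  destruct (HK q' Hq') as [r' [Hr' [[_ [w Hw]] _]]].
  destruct (HU w (HN1 q' r' (baire_ball_le _ _ _ _ (Hnear q' Hqq') (Nat.le_max_r M N1)) Hr' w Hw))
    as [y [L [x [HLM [Hyw [_ Hstable]]]]]].
  destruct (Havoid x) as [b [Hqb [Hb Hbfar]]].
  destruct (HK b Hb) as [rb [Hrb [[_ [y' Hy']] Hrealb]]].
  assert (Hwy' : dist w y' < 5 * delta)
    by (apply (HN2 q' b r' rb); auto; eapply baire_ball_le; eauto; lia).
  assert (Hyy' : dist y y' < / 2 ^ L / 2).
  { pose proof (inv_pow2_le _ _ HLM); pose proof (dist_tri Y y w y'); unfold delta in *; lra. }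
  destruct (Hstable b rb y' Hrealb) as [x' [Hx' Hxx']]; auto.
  { eapply baire_ball_le; [apply Hnear, Hqb | lia]. }
  apply (Hbfar x' Hx'); unfold ball; lra.
Qed.
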